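(* Let $G$ be an interval graph. If $G$ contains the forbidden pattern $\mathtt{F}$ as an induced subgraph (an induced path $P$ on $k$ vertices whose open neighbourhood contains an independent set of at least $k+3$ vertices), then $G$ is not an exactly hittable interval graph.
   Context: An interval graph is the intersection graph of a finite family of intervals on a line. An interval family (interval hypergraph) is exactly hittable if there is a set $S$ of points with $|S\cap I|=1$ for every interval $I$ of the family. An exactly hittable interval graph is an interval graph having an interval representation that is exactly hittable. The open neighbourhood of a path $P$ is the set of vertices not on $P$ adjacent to some vertex of $P$. *)

From mathcomp Require Import all_boot.
From Stdlib Require Import Reals.
Set Implicit Arguments. Unset Strict Implicit. Unset Printing Implicit Defensive.

Local Open Scope R_scope.

(* A finite simple graph: vertex type T : finType, adjacency e : rel T,
   assumed symmetric and irreflexive (hypotheses of the theorem). *)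

Definition interval_rep (T : finType) (e : rel T) (lo hi : T -> R) : Prop :=
  (forall v, lo v <= hi v) /\
  (forall u v, u != v ->
     (e u v <-> exists x, lo u <= x <= hi u /\ lo v <= x <= hi v)).

Definition interval_graph (T : finType) (e : rel T) : Prop :=
  exists lo hi : T -> R, interval_rep e lo hi.

Definition exactly_hittable (T : finType) (lo hi : T -> R) : Prop :=
  exists S : R -> Prop,
    forall v, exists! x, S x /\ lo v <= x <= hi v.

Definition exactly_hittable_interval_graph (T : finType) (e : rel T) : Prop :=
  exists lo hi : T -> R, interval_rep e lo hi /\ exactly_hittable lo hi.

Local Open Scope nat_scope.

Definition induced_path (T : finType) (e : rel T) (k : nat) (P : 'I_k -> T) : Prop :=
  injective P /\
  forall i j : 'I_k, e (P i) (P j) <-> (val i == (val j).+1) || (val j == (val i).+1).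

Definition open_nbhd (T : finType) (e : rel T) (k : nat) (P : 'I_k -> T) : {set T} :=
  [set x | (x \notin [set P i | i : 'I_k]) && [exists i : 'I_k, e x (P i)]].

Definition independent (T : finType) (e : rel T) (I : {set T}) : Prop :=
  forall u v, u \in I -> v \in I -> ~~ e u v.

Definition contains_F (T : finType) (e : rel T) : Prop :=
  exists (k : nat) (P : 'I_k -> T) (I : {set T}),
    induced_path e P /\ I \subset open_nbhd e P /\ independent e I /\ k + 3 <= #|I|.

(** Let S hit every interval exactly once. The union of the intervals of the
    path P is an interval [m, M], and the intervals of the independent set I
    are pairwise disjoint. Each member of I meets [m, M], so it either
    contains m, or contains M, or lies inside [m, M]; in the last case its
    hit point lies in some path interval. At most one member of I contains m,
    at most one contains M, and a path interval contains only one point of S,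
    hence only one hit point of a member of I. So #|I| <= k + 2. *)

From mathcomp Require Import all_boot zify.
From Stdlib Require Import Reals Lra ClassicalEpsilon.

Local Open Scope R_scope.

Lemma leq_card_rel {T U : finType} {A : {set T}} (R : T -> U -> Prop) :
  (forall v, v \in A -> exists i, R v i) ->
  (forall u v i, u \in A -> v \in A -> R u i -> R v i -> u = v) ->
  (#|A| <= #|U|)%nat.
Proof.
move=> R_total R_inj; case: (set_0Vmem A) => [-> | [v0 v0A]]; first by rewrite cards0.
have [i0 _] := R_total v0 v0A.
have choose_index v : {i | v \in A -> R v i}.
  apply: constructive_indefinite_description.
  case: (boolP (v \in A)) => [/R_total [i Ri] | vA]; first by exists i.
  by exists i0.
apply: (@leq_card_in _ _ (fun v => sval (choose_index v))) => u v uA vA eq_uv.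
apply: (R_inj u v (sval (choose_index u)) uA vA); first exact: (svalP (choose_index u)).
by rewrite eq_uv; exact: (svalP (choose_index v)).
Qed.

Lemma exists_argminR {A : finType} (f : A -> R) : A -> exists i, forall j, f i <= f j.
Proof.
move=> a; suff [i min_i] : exists i, forall j, j \in enum A -> f i <= f j.
  by exists i => j; apply: min_i; rewrite mem_enum.
elim: (enum A) => [|x s [i min_i]]; first by exists a.
have [fx_le | fi_lt] := Rle_lt_dec (f x) (f i); [exists x | exists i];
  by move=> j; rewrite inE => /orP [/eqP -> | /min_i]; lra.
Qed.

Lemma exists_argmaxR {A : finType} (f : A -> R) : A -> exists i, forall j, f j <= f i.
Proof.
by move=> a; have [i min_i] := exists_argminR (fun j => - f j) a; exists i => j; have := min_i j; lra.
Qed.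

Definition convex (U : R -> Prop) : Prop :=
  forall x y z, U x -> U z -> x <= y <= z -> U y.

Lemma convex_ext {U V : R -> Prop} : (forall x, U x <-> V x) -> convex U -> convex V.
Proof. by move=> UV cU x y z /UV Ux /UV Uz xyz; apply/UV; apply: cU xyz. Qed.

Lemma convex_itv a b : convex (fun x => a <= x <= b).
Proof. move=> x y z; lra. Qed.

Lemma convexU {U V : R -> Prop} {w : R} :
  convex U -> convex V -> U w -> V w -> convex (fun x => U x \/ V x).
Proof.
move=> cU cV Uw Vw x y z Hx Hz xyz.
have [y_le_w | w_lt_y] := Rle_lt_dec y w.
- by case: Hx => Hx; [left; apply: (cU x _ w) | right; apply: (cV x _ w)] => //; lra.
- by case: Hz => Hz; [left; apply: (cU w _ z) | right; apply: (cV w _ z)] => //; lra.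
Qed.

Lemma chain_union_convex {lo hi : nat -> R} {N : nat} :
  (forall n, (n < N)%nat -> exists x, lo n <= x <= hi n /\ lo n.+1 <= x <= hi n.+1) ->
  convex (fun x => exists2 n, (n <= N)%nat & lo n <= x <= hi n).
Proof.
elim: N => [_ | N IH chain].
  apply: (convex_ext _ (convex_itv (lo 0%nat) (hi 0%nat))) => x.
  by split=> [|[n]]; [exists 0%nat | rewrite leqn0 => /eqP ->].
have [x [Nx SNx]] := chain N (ltnSn N).
have cN := IH (fun n lt_nN => chain n (leqW lt_nN)).
apply: (convex_ext _ (convexU cN (convex_itv _ _) (ex_intro2 _ _ N (leqnn N) Nx) SNx)) => y.
split=> [[[n le_nN Hy] | Hy] | [n]]; first by exists n; rewrite ?leqW.
  by exists N.+1.
by rewrite leq_eqVlt => /orP [/eqP -> | le_nN]; [right | left; exists n].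
Qed.

Section IntervalRepresentation.

Context {T : finType} {e : rel T} {lo hi : T -> R}.
Hypothesis rep : interval_rep e lo hi.

Lemma independent_itv_meet_eq {I : {set T}} {u v : T} {x : R} :
  independent e I -> u \in I -> v \in I ->
  lo u <= x <= hi u -> lo v <= x <= hi v -> u = v.
Proof.
move=> indep uI vI xu xv; case: (eqVneq u v) => // neq_uv.
by move/negP: (indep u v uI vI); case; apply/(proj2 rep u v neq_uv); exists x.
Qed.

Lemma path_union_convex {k} {P : 'I_k.+1 -> T} :
  induced_path e P -> convex (fun x => exists i, lo (P i) <= x <= hi (P i)).
Proof.
case=> P_inj P_adj.
have chain n : (n < k)%nat -> exists x, lo (P (inord n)) <= x <= hi (P (inord n)) /\
                                      lo (P (inord n.+1)) <= x <= hi (P (inord n.+1)).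
  move=> lt_nk; have neq : P (inord n) != P (inord n.+1).
    by apply/eqP => /P_inj /(congr1 (@nat_of_ord _)); rewrite !inordK //; lia.
  apply/(proj2 rep _ _ neq)/P_adj.
  by rewrite /= !inordK ?eqxx ?orbT //; lia.
apply: (convex_ext _ (chain_union_convex chain)) => x.
split=> [[n _ Hx] | [i Hx]]; first by exists (inord n).
by exists i; rewrite ?inord_val // -ltnS.
Qed.

Lemma open_nbhd_meets_path {k} {P : 'I_k -> T} {v : T} :
  v \in open_nbhd e P -> exists i x, lo v <= x <= hi v /\ lo (P i) <= x <= hi (P i).
Proof.
rewrite inE => /andP [v_off /existsP [i e_vPi]]; exists i.
have neq : v != P i by apply: contraNneq v_off => ->; exact: imset_f.
exact: (proj1 (proj2 rep v (P i) neq) e_vPi).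
Qed.

Lemma leq_card_independent_open_nbhd {S : R -> Prop} {k} {P : 'I_k -> T} {I : {set T}} :
  (forall v, exists! x, S x /\ lo v <= x <= hi v) ->
  induced_path e P -> I \subset open_nbhd e P -> independent e I ->
  (#|I| <= k + 2)%nat.
Proof.
move=> hit; case: k P => [|k] P path_P /subsetP I_nbhd indep.
  case: (set_0Vmem I) => [-> | [v vI]]; first by rewrite cards0.
  by have [[]] := open_nbhd_meets_path (I_nbhd v vI).
have [im min_im] := exists_argminR (fun i => lo (P i)) ord0.
have [iM max_iM] := exists_argmaxR (fun i => hi (P i)) ord0.
set m := lo (P im); set M := hi (P iM).
have cover x : m <= x <= M -> exists i, lo (P i) <= x <= hi (P i).
  apply: (path_union_convex path_P m x M).
  - by exists im; have := rep.1 (P im); rewrite /m; lra.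
  - by exists iM; have := rep.1 (P iM); rewrite /M; lra.
pose side v (o : option (option 'I_k.+1)) := match o with
  | None => lo v <= m <= hi v
  | Some None => lo v <= M <= hi v
  | Some (Some i) => exists x, S x /\ lo v <= x <= hi v /\ lo (P i) <= x <= hi (P i)
  end.
have card_sides : #|{: option (option 'I_k.+1)}| = (k.+1 + 2)%nat.
  by rewrite !card_option card_ord addn2.
rewrite -card_sides.
apply: (leq_card_rel side) => [v vI | u v [[i|]|] uI vI].
- have [i [p [pv pPi]]] := open_nbhd_meets_path (I_nbhd v vI).
  have [x [[Sx xv] _]] := hit v.
  have := min_im i; have := max_iM i; rewrite -/m -/M => le_iM le_mi.
  have [lo_lt_m | m_le_lo] := Rlt_le_dec (lo v) m; first by exists None => /=; lra.
  have [M_lt_hi | hi_le_M] := Rlt_le_dec M (hi v); first by exists (Some None) => /=; lra.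
  have [j xPj] := cover x ltac:(lra).
  by exists (Some (Some j)), x.
- move=> [x [Sx [xu xPi]]] [y [Sy [yv yPi]]].
  have [z [_ z_uniq]] := hit (P i).
  have eq_xy : x = y by rewrite -(z_uniq x) ?(z_uniq y).
  by apply: (independent_itv_meet_eq indep uI vI xu); rewrite eq_xy.
- exact: independent_itv_meet_eq indep uI vI.
- exact: independent_itv_meet_eq indep uI vI.
Qed.

End IntervalRepresentation.

Theorem lemma13 (T : finType) (e : rel T)
  (e_sym : symmetric e) (e_irr : irreflexive e)
  (hG : interval_graph e) (hF : contains_F e) :
  ~ exactly_hittable_interval_graph e.
Proof.
case=> lo [hi [rep [S hit]]].
case: hF => k [P [I [path_P [I_nbhd [indep card_I]]]]].
have := leq_card_independent_open_nbhd rep hit path_P I_nbhd indep.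
lia.
Qed.
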